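(* Under the hypothesis that $\sum_{k=1}^\infty\bar\lambda^X_k\mathbf 1(\bar\lambda^X_k<e^{-x})=\varphi(x)$, $x\ge0$, for some slowly varying function $\varphi$, for every $\varepsilon\in(0,1)$ the sequence $(\ln n^{X_d}(\varepsilon))_{d\in\mathbb N}$ is rapidly varying: $$\lim_{d\to\infty}\frac{\ln n^{X_{\lfloor cd\rfloor}}(\varepsilon)}{\ln n^{X_d}(\varepsilon)}=\infty\quad\text{for all }c>1.$$
   Context: Let $X$ be a centered random element of a separable Hilbert space $H$ with $\mathbb E\|X\|^2<\infty$, covariance eigenvalues $\lambda^X_1\ge\lambda^X_2\ge\dots\ge0$ (with multiplicity, padded with zeros), $\lambda^X_1>0$, trace $\Lambda^X$, and $\bar\lambda^X_k=\lambda^X_k/\Lambda^X$. $X_d=X^{\otimes d}$ is the centered random element of $H^{\otimes d}$ with covariance operator $(K^X)^{\otimes d}$; its eigenvalues are $\prod_{j=1}^d\lambda^X_{k_j}$. With $\bar\lambda^{X_d}_k$ the normalized nonincreasing eigenvalues of $X_d$, $n^{X_d}(\varepsilon)=\min\{n\in\mathbb N:\sum_{k>n}\bar\lambda^{X_d}_k\le\varepsilon^2\}$. A slowly varying function is a positive measurable $\varphi$ on some $[T,\infty)$ with $\varphi(cx)/\varphi(x)\to1$ as $x\to\infty$ for every $c>0$. $\lfloor\cdot\rfloor$ is the floor function. *)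

From Stdlib Require Import Reals Lra List.
Open Scope R_scope.

(* Covariance eigenvalue data of X: lam 0 >= lam 1 >= ... >= 0 (lam k = lambda^X_{k+1}),
   summable with trace Lam, lam 0 > 0. *)
Definition eigen_data (lam : nat -> R) (Lam : R) : Prop :=
  (forall k, 0 <= lam k) /\ (forall k, lam (S k) <= lam k) /\
  0 < lam 0%nat /\ infinite_sum lam Lam.

Definition lam_bar (lam : nat -> R) (Lam : R) (k : nat) : R := lam k / Lam.

(* eigenvalue of X_d = X^{tensor d} at multi-index l (a list of length d):
   product of the (normalized) one-dimensional eigenvalues *)
Definition tensor_eig (f : nat -> R) (l : list nat) : R :=
  fold_right (fun k acc => f k * acc) 1 l.

(* mu is the nonincreasing sequence of the values g l (l ranging over multi-indices
   of length d), counted with multiplicity, padded with zeros. *)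
Definition is_noninc_rearr (g : list nat -> R) (d : nat) (mu : nat -> R) : Prop :=
  (forall k, 0 <= mu k) /\ (forall k, mu (S k) <= mu k) /\
  exists sigma : nat -> list nat,
    (forall k, 0 < mu k -> length (sigma k) = d /\ mu k = g (sigma k)) /\
    (forall k1 k2, 0 < mu k1 -> 0 < mu k2 -> sigma k1 = sigma k2 -> k1 = k2) /\
    (forall l, length l = d -> 0 < g l -> exists k, 0 < mu k /\ sigma k = l).

(* sum_{k > n} mu_k <= eps^2  (mu indexed from 0, i.e. mu k = bar lambda_{k+1}) *)
Definition tail_le (mu : nat -> R) (n : nat) (eps : R) : Prop :=
  exists s, infinite_sum (fun j => mu (n + j)%nat) s /\ s <= eps ^ 2.

Definition is_approx_complexity (mu : nat -> R) (eps : R) (n : nat) : Prop :=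
  tail_le mu n eps /\ forall m, (m < n)%nat -> ~ tail_le mu m eps.

(* slowly varying: positive on some [T, oo) and phi(cx)/phi(x) -> 1 for every c > 0.
   (Measurability is automatic for the phi below, which is monotone.) *)
Definition slowly_varying (phi : R -> R) : Prop :=
  (exists T, forall x, T <= x -> 0 < phi x) /\
  forall c, 0 < c -> forall e, 0 < e -> exists M, forall x, M <= x ->
    Rabs (phi (c * x) / phi x - 1) < e.

Definition floorN (x : R) : nat := Z.to_nat (Int_part x).

(* Write [p] for the normalized eigenvalues of [X] and [Y k = - ln (p k)], so that the
   eigenvalues of [X_d] are [exp (- (Y k1 + ... + Y kd))], and [phi x] is the mass of the [p k]
   below [exp (- x)].  The multi-indices with some factor below [exp (- t)] carry mass about
   [1 - (1 - phi t) ^ d], and all their eigenvalues are below [exp (- t)]; if [d phi t >= b] for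
   a [b] with [1 - exp (- b) > eps ^ 2], at least [delta exp t] eigenvalues are needed, so
   [ln n(X_d) >= t - C].  Conversely, if [d phi x <= A] with [1 - exp (- A) < eps ^ 2], a Markov
   bound on [Y k1 + ... + Y kd] over the factors above [exp (- x)] (whose mean is controlled by
   the doubling bound [phi s <= 3/2 phi (2 s)]) shows [ln n(X_d) <= x / rho].
   Choose [x] with [d phi x] just below [A].  For [m = floor (c d)] and any fixed [K], slow
   variation gives [phi (K x / rho) ~ phi x], so [m phi (K x / rho) ~ c d phi x >= b] when
   [c A > b]; hence [ln n(X_m) >= K x / rho - C >= (K - 1) ln n(X_d)], and [K] is arbitrary. *)

From Stdlib Require Import Reals List Lra Lia Wf_nat ZArith Classical ClassicalEpsilon FinFun.
Open Scope R_scope.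

Definition sumL {A} (f : A -> R) (L : list A) : R :=
  fold_right (fun x acc => f x + acc) 0 L.

Lemma sumL_app {A} (f : A -> R) L1 L2 : sumL f (L1 ++ L2) = sumL f L1 + sumL f L2.
Proof. induction L1; simpl; [lra | rewrite IHL1; lra]. Qed.

Lemma sumL_ext {A} (f g : A -> R) L : (forall x, In x L -> f x = g x) -> sumL f L = sumL g L.
Proof. induction L; simpl; intros H; auto. rewrite H, IHL by auto. reflexivity. Qed.

Lemma sumL_le {A} (f g : A -> R) L : (forall x, In x L -> f x <= g x) -> sumL f L <= sumL g L.
Proof.
  induction L; simpl; intros H; [lra |].
  assert (H1 := H a (or_introl eq_refl)). assert (sumL f L <= sumL g L) by auto. lra.
Qed.

Lemma sumL_nonneg {A} (f : A -> R) L : (forall x, 0 <= f x) -> 0 <= sumL f L.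
Proof. induction L; simpl; intros H; [lra |]. assert (H1 := H a). specialize (IHL H). lra. Qed.

Lemma sumL_plus {A} (f g : A -> R) L : sumL (fun x => f x + g x) L = sumL f L + sumL g L.
Proof. induction L; simpl; [lra | rewrite IHL; lra]. Qed.

Lemma sumL_minus {A} (f g : A -> R) L : sumL (fun x => f x - g x) L = sumL f L - sumL g L.
Proof. induction L; simpl; [lra | rewrite IHL; lra]. Qed.

Lemma sumL_scal {A} (c : R) (f : A -> R) L : sumL (fun x => c * f x) L = c * sumL f L.
Proof. induction L; simpl; [lra | rewrite IHL; lra]. Qed.

Lemma sumL_const {A} (c : R) (L : list A) : sumL (fun _ => c) L = INR (length L) * c.
Proof. induction L; simpl length; [simpl; lra |]. rewrite S_INR. simpl. rewrite IHL. lra. Qed.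

Lemma sumL_map {A B} (f : B -> R) (h : A -> B) L : sumL f (map h L) = sumL (fun x => f (h x)) L.
Proof. induction L; simpl; [lra | rewrite IHL; lra]. Qed.

Lemma sumL_flat_map {A B} (f : B -> R) (h : A -> list B) L :
  sumL f (flat_map h L) = sumL (fun x => sumL f (h x)) L.
Proof. induction L; simpl; [lra | rewrite sumL_app, IHL; lra]. Qed.

Lemma sumL_le_injective {A B} (s : A -> B) L Ls (f : B -> R) :
  NoDup L -> (forall x y, In x L -> In y L -> s x = s y -> x = y) ->
  (forall x, In x L -> In (s x) Ls) -> (forall b, 0 <= f b) ->
  sumL (fun x => f (s x)) L <= sumL f Ls.
Proof.
  revert Ls. induction L as [|x L IH]; intros Ls Hnd Hinj Hin Hf.
  { apply sumL_nonneg; auto. }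
  destruct (in_split (s x) Ls (Hin x (or_introl eq_refl))) as [Ls1 [Ls2 ->]].
  inversion Hnd; subst.
  assert (sumL (fun y => f (s y)) L <= sumL f (Ls1 ++ Ls2)).
  { apply IH; auto.
    - intros; apply Hinj; simpl; auto.
    - intros y Hy. assert (Hy' := Hin y (or_intror Hy)).
      apply in_app_or in Hy'. apply in_or_app. destruct Hy' as [H | [H | H]]; auto.
      assert (y = x) by (apply Hinj; simpl; auto). subst; contradiction. }
  rewrite sumL_app in *. simpl. lra.
Qed.

Lemma sum_f_R0_sumL f n : sum_f_R0 f n = sumL f (seq 0 (S n)).
Proof. induction n; [simpl; lra |]. rewrite seq_S, sumL_app, <- IHn. simpl; lra. Qed.

Lemma sumL_seq_shift (f : nat -> R) N n :
  sumL (fun j => f (N + j)%nat) (seq 0 n) = sumL f (seq N n).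
Proof.
  enough (H : forall k, sumL (fun j => f (N + j)%nat) (seq k n) = sumL f (seq (N + k) n))
    by (rewrite H, Nat.add_0_r; reflexivity).
  induction n; intros k; simpl; auto. rewrite IHn, Nat.add_succ_r. reflexivity.
Qed.

Lemma noninc_le (u : nat -> R) : (forall k, u (S k) <= u k) ->
  forall j j', (j <= j')%nat -> u j' <= u j.
Proof. intros H j j' Hj. induction Hj; [lra |]. specialize (H m). lra. Qed.

Lemma least_witness (P : nat -> Prop) : (exists n, P n) ->
  exists n, P n /\ forall m, (m < n)%nat -> ~ P m.
Proof.
  intros [n Hn]. revert Hn. induction n as [n IH] using (well_founded_induction lt_wf).
  intros Hn. destruct (classic (exists m, (m < n)%nat /\ P m)) as [[m [Hm Pm]] | H].
  - apply (IH m Hm Pm).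
  - exists n. split; auto. intros m Hm Pm. apply H; eauto.
Qed.

Lemma list_nat_bounded (L : list nat) : exists K, forall k, In k L -> (k < K)%nat.
Proof.
  induction L as [|a L [K HK]]; [exists O; intros k [] |].
  exists (S (max a K)). intros k [<- | Hk]; [| specialize (HK k Hk)]; lia.
Qed.

Lemma sum_f_R0_le_infinite_sum f s n : (forall k, 0 <= f k) -> infinite_sum f s ->
  sum_f_R0 f n <= s.
Proof.
  intros Hf Hs. apply (growing_ineq (sum_f_R0 f)); auto.
  intros m. simpl. specialize (Hf (S m)). lra.
Qed.

Lemma sumL_seq_le_infinite_sum f s M : (forall k, 0 <= f k) -> infinite_sum f s ->
  sumL f (seq 0 M) <= s.
Proof.
  intros Hf Hs. destruct M.
  - simpl. apply Rle_trans with (sum_f_R0 f 0); [apply Hf | apply sum_f_R0_le_infinite_sum; auto].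
  - rewrite <- sum_f_R0_sumL. apply sum_f_R0_le_infinite_sum; auto.
Qed.

Lemma infinite_sum_le f g s t : (forall k, f k <= g k) ->
  infinite_sum f s -> infinite_sum g t -> s <= t.
Proof.
  intros H Hs Ht. apply (Rle_cv_lim (Un := sum_f_R0 f) (Vn := sum_f_R0 g)); auto.
  intros n; apply sum_Rle; auto.
Qed.

Lemma infinite_sum_ext f g s : (forall k, f k = g k) -> infinite_sum f s -> infinite_sum g s.
Proof.
  intros H Hs e He. destruct (Hs e He) as [N HN]. exists N. intros n Hn.
  rewrite (sum_eq g f) by (intros; rewrite H; auto). auto.
Qed.

Lemma infinite_sum_minus f g s t : infinite_sum f s -> infinite_sum g t ->
  infinite_sum (fun k => f k - g k) (s - t).
Proof.
  intros Hs Ht e He. destruct (CV_minus _ _ _ _ Hs Ht e He) as [N HN].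
  exists N. intros n Hn. rewrite minus_sum. apply HN; auto.
Qed.

Lemma infinite_sum_mult_r f s a : infinite_sum f s -> infinite_sum (fun k => f k * a) (s * a).
Proof.
  intros Hs. assert (Ha : Un_cv (fun _ => a) a).
  { intros e He. exists O. intros n _. unfold R_dist. rewrite Rminus_diag, Rabs_R0. exact He. }
  intros e He. destruct (CV_mult _ _ _ _ Hs Ha e He) as [N HN].
  exists N. intros n Hn. rewrite <- scal_sum, Rmult_comm. apply HN; auto.
Qed.

Lemma infinite_sum_const0 f s : (forall k, f k = 0) -> infinite_sum f s -> s = 0.
Proof.
  intros H Hs. apply (uniqueness_sum f); auto. intros e He. exists O. intros n _.
  unfold R_dist. rewrite sum_eq_R0 by auto. rewrite Rminus_0_r, Rabs_R0; lra.
Qed.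

Lemma exp_le_exp_of_le x y : x <= y -> exp x <= exp y.
Proof. intros [H | ->]; [left; apply exp_increasing; auto | right; reflexivity]. Qed.

Lemma ln_le_ln x y : 0 < x -> x <= y -> ln x <= ln y.
Proof. intros Hx [H | ->]; [left; apply ln_increasing; auto | right; reflexivity]. Qed.

Lemma exp_neg_le_iff x q : 0 < q -> (exp (- x) <= q <-> - ln q <= x).
Proof.
  intros Hq. split; intros H.
  - apply ln_le_ln in H; [| apply exp_pos]. rewrite ln_exp in H. lra.
  - rewrite <- (exp_ln q) by auto. apply exp_le_exp_of_le. lra.
Qed.

Lemma ln_nonpos q : 0 < q -> q <= 1 -> ln q <= 0.
Proof. intros. rewrite <- ln_1. apply ln_le_ln; auto. Qed.

Lemma pow_sub_pow_le a q m : 0 <= a -> a <= q -> q <= 1 -> q ^ m - (q - a) ^ m <= 1 - (1 - a) ^ m.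
Proof.
  intros Ha Haq Hq. induction m; simpl; [lra |].
  assert ((q - a) ^ m <= (1 - a) ^ m) by (apply pow_incr; lra).
  assert ((q - a) ^ m <= q ^ m) by (apply pow_incr; lra).
  assert (0 <= (q - a) ^ m) by (apply pow_le; lra).
  nra.
Qed.

Lemma bernoulli_ineq h n : -1 <= h -> 1 + INR n * h <= (1 + h) ^ n.
Proof.
  intros Hh. induction n; [simpl; lra |]. rewrite S_INR. simpl.
  assert (0 <= INR n) by apply pos_INR. assert (0 <= INR n * (h * h)) by (apply Rmult_le_pos; nra).
  nra.
Qed.

Lemma exp_pow z n : exp z ^ n = exp (INR n * z).
Proof.
  induction n; [simpl; rewrite Rmult_0_l, exp_0; auto |].
  rewrite S_INR. simpl. rewrite IHn, <- exp_plus. f_equal; ring.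
Qed.

Lemma pow_le_exp z n : 0 <= z <= 1 -> (1 - z) ^ n <= exp (- (INR n * z)).
Proof.
  intros Hz. replace (- (INR n * z)) with (INR n * - z) by ring. rewrite <- exp_pow.
  apply pow_incr. assert (H := exp_ineq1_le (- z)). lra.
Qed.

(* From [(1 - z) ^ n (1 + z) ^ n = (1 - z ^ 2) ^ n >= 1 - n z ^ 2]
   and [(1 + z) ^ n <= exp (n z)]. *)
Lemma one_sub_pow_le z n : 0 <= z <= 1 ->
  1 - (1 - z) ^ n <= 1 - exp (- (INR n * z)) + INR n * z ^ 2.
Proof.
  intros Hz.
  assert (H1 : (1 + z) ^ n <= exp (INR n * z)).
  { rewrite <- exp_pow. apply pow_incr. split; [lra | apply exp_ineq1_le]. }
  assert (H2 : 1 + INR n * (- z ^ 2) <= (1 - z) ^ n * (1 + z) ^ n).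
  { rewrite <- Rpow_mult_distr. replace ((1 - z) * (1 + z)) with (1 + - z ^ 2) by ring.
    apply bernoulli_ineq. simpl; nra. }
  assert (H3 : 0 <= (1 - z) ^ n) by (apply pow_le; lra).
  assert (H4 : exp (INR n * z) * exp (- (INR n * z)) = 1)
    by (rewrite <- exp_plus, Rplus_opp_r; apply exp_0).
  assert (H5 : 0 < exp (- (INR n * z)) <= 1).
  { split; [apply exp_pos |]. rewrite <- exp_0. apply exp_le_exp_of_le.
    assert (0 <= INR n) by apply pos_INR. nra. }
  assert (H6 : 0 <= INR n * z ^ 2) by (apply Rmult_le_pos; [apply pos_INR | nra]).
  assert (1 - INR n * z ^ 2 <= (1 - z) ^ n * exp (INR n * z)).
  { apply Rle_trans with ((1 - z) ^ n * (1 + z) ^ n); [lra | apply Rmult_le_compat_l; auto]. }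
  nra.
Qed.

Lemma floorN_spec y : 0 <= y -> y - 1 < INR (floorN y) <= y.
Proof.
  intros Hy. unfold floorN. destruct (base_Int_part y) as [H1 H2].
  assert (HI : (0 <= Int_part y)%Z).
  { destruct (Z.le_gt_cases 0 (Int_part y)) as [| Hneg]; auto.
    assert (Int_part y <= -1)%Z as Hle by lia. apply IZR_le in Hle. lra. }
  rewrite INR_IZR_INZ, Z2Nat.id by auto. lra.
Qed.

Lemma floorN_ge_frac c eta y : 0 < c -> 0 < eta < 1 -> 2 / (eta * c) <= y ->
  (1 - eta) * (c * y) <= INR (floorN (c * y)) /\ (1 <= floorN (c * y))%nat.
Proof.
  intros Hc Heta Hy.
  assert (Hy2 : 2 <= eta * c * y).
  { replace 2 with (eta * c * (2 / (eta * c))) by (field; nra). apply Rmult_le_compat_l; nra. }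
  destruct (floorN_spec (c * y)) as [Hf _]; [nra |].
  split; [nra |]. apply INR_le. simpl. nra.
Qed.

Lemma Rmax_le_inv x y z : Rmax x y <= z -> x <= z /\ y <= z.
Proof. intros H. split; eapply Rle_trans; [apply Rmax_l | exact H | apply Rmax_r | exact H]. Qed.

Lemma ratio_gt_of_affine_bounds R0 K C u Ld Lm : R0 + 1 < K -> 1 <= K -> 0 < Ld -> Ld <= u ->
  C <= u -> K * u - C <= Lm -> R0 < Lm / Ld.
Proof.
  intros HK HK1 HLd Hu HC HLm.
  assert ((K - 1) * Ld <= (K - 1) * u) by (apply Rmult_le_compat_l; lra).
  apply Rlt_le_trans with (K - 1); [lra |].
  apply Rmult_le_reg_r with Ld; auto. unfold Rdiv. rewrite Rmult_assoc, Rinv_l, Rmult_1_r; lra.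
Qed.

Lemma scaled_product_lower_bound eta c A b y m z z' : 0 < eta < 1 -> 0 < c -> 0 <= y -> 0 <= z ->
  b <= (1 - eta) ^ 3 * c * A -> (1 - eta) * A < y * z -> (1 - eta) * (c * y) <= m ->
  (1 - eta) * z < z' -> b <= m * z'.
Proof.
  intros Heta Hc Hy Hz Hb HA Hm Hz'.
  assert (H1 : (1 - eta) ^ 2 * c * ((1 - eta) * A) <= (1 - eta) ^ 2 * c * (y * z))
    by (apply Rmult_le_compat_l; [apply Rmult_le_pos; [apply pow_le |]; lra | lra]).
  assert (H2 : (1 - eta) * (c * y) * ((1 - eta) * z) <= m * z')
    by (apply Rmult_le_compat; try lra; apply Rmult_le_pos; nra).
  replace ((1 - eta) ^ 2 * c * ((1 - eta) * A)) with ((1 - eta) ^ 3 * c * A) in H1 by ring.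
  replace ((1 - eta) * (c * y) * ((1 - eta) * z)) with ((1 - eta) ^ 2 * c * (y * z)) in H2 by ring.
  lra.
Qed.

(** * Multi-indices *)

Fixpoint Box (m M : nat) : list (list nat) :=
  match m with
  | O => nil :: nil
  | S m' => flat_map (fun k => map (cons k) (Box m' M)) (seq 0 M)
  end.

Lemma In_Box m M l : length l = m -> (forall k, In k l -> (k < M)%nat) -> In l (Box m M).
Proof.
  revert l; induction m; intros l Hl Hk.
  - destruct l; simpl in *; [auto | discriminate].
  - destruct l as [|k l]; simpl in Hl; [discriminate |]. simpl.
    apply in_flat_map. exists k. split.
    + apply in_seq. assert (k < M)%nat by (apply Hk; simpl; auto). lia.
    + apply in_map, IHm; [lia |]. intros; apply Hk; simpl; auto.
Qed.

Lemma Box_length m M l : In l (Box m M) -> length l = m.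
Proof.
  revert l; induction m; intros l H; simpl in H.
  - destruct H as [<- | []]; reflexivity.
  - apply in_flat_map in H. destruct H as [k [_ H]]. apply in_map_iff in H.
    destruct H as [l' [<- H]]. simpl. rewrite (IHm l' H). reflexivity.
Qed.

Lemma NoDup_flat_map_cons (L : list (list nat)) ks : NoDup L -> NoDup ks ->
  NoDup (flat_map (fun k => map (cons k) L) ks).
Proof.
  intros HL; induction ks as [|k ks IH]; intros Hks; simpl; [constructor |].
  inversion Hks; subst. apply NoDup_app.
  - apply Injective_map_NoDup; auto. intros x y H; inversion H; auto.
  - apply IH; auto.
  - intros a Ha Hb. apply in_map_iff in Ha. destruct Ha as [l [<- _]].
    apply in_flat_map in Hb. destruct Hb as [k' [Hk' Hb]]. apply in_map_iff in Hb.
    destruct Hb as [l' [E _]]. inversion E; subst. auto.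
Qed.

Lemma Box_NoDup m M : NoDup (Box m M).
Proof.
  induction m; simpl; [repeat constructor; auto |].
  apply NoDup_flat_map_cons; auto. apply seq_NoDup.
Qed.

(** * Products of eigenvalues *)

Lemma tensor_eig_cons f k l : tensor_eig f (k :: l) = f k * tensor_eig f l.
Proof. reflexivity. Qed.

Lemma tensor_eig_nonneg h l : (forall k, 0 <= h k) -> 0 <= tensor_eig h l.
Proof. intros H; induction l; simpl; [lra |]. apply Rmult_le_pos; auto. Qed.

Lemma tensor_eig_pos h l : (forall k, 0 < h k) -> 0 < tensor_eig h l.
Proof. intros H; induction l; simpl; [lra |]. apply Rmult_lt_0_compat; auto. Qed.

Lemma tensor_eig_le1 h l : (forall k, 0 < h k) -> (forall k, h k <= 1) -> tensor_eig h l <= 1.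
Proof.
  intros H0 H1; induction l; simpl; [lra |].
  assert (0 < h a) by auto. assert (h a <= 1) by auto.
  assert (0 < tensor_eig h l) by (apply tensor_eig_pos; auto). nra.
Qed.

Lemma ln_tensor_eig h l : (forall k, 0 < h k) ->
  ln (tensor_eig h l) = - sumL (fun k => - ln (h k)) l.
Proof.
  intros H; induction l; simpl; [rewrite ln_1; lra |].
  rewrite ln_mult, IHl by (auto; apply tensor_eig_pos; auto). lra.
Qed.

Lemma sumL_Box_tensor_eig h m M :
  sumL (tensor_eig h) (Box m M) = (sumL h (seq 0 M)) ^ m.
Proof.
  induction m; simpl; [lra |].
  rewrite sumL_flat_map, <- IHm, Rmult_comm, <- sumL_scal. apply sumL_ext. intros k _.
  rewrite sumL_map, Rmult_comm, <- sumL_scal. apply sumL_ext. intros l _. reflexivity.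
Qed.

Lemma sumL_Box_tensor_eig_sumL h Y m M :
  (forall k, 0 <= h k) -> (forall k, 0 <= Y k) -> sumL h (seq 0 M) <= 1 ->
  sumL (fun l => tensor_eig h l * sumL Y l) (Box m M)
    <= INR m * sumL (fun k => h k * Y k) (seq 0 M).
Proof.
  intros Hh HY Hr.
  set (r := sumL h (seq 0 M)) in *. set (B := sumL (fun k => h k * Y k) (seq 0 M)).
  assert (Hr0 : 0 <= r) by (apply sumL_nonneg; auto).
  assert (HB : 0 <= B) by (apply sumL_nonneg; intros; apply Rmult_le_pos; auto).
  induction m; [simpl; lra |].
  set (E := sumL (fun l => tensor_eig h l * sumL Y l) (Box m M)) in *.
  assert (Hstep : sumL (fun l => tensor_eig h l * sumL Y l) (Box (S m) M) = B * r ^ m + r * E).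
  { unfold B, r, E. rewrite <- sumL_Box_tensor_eig. simpl Box. rewrite sumL_flat_map.
    transitivity (sumL (fun k => sumL (tensor_eig h) (Box m M) * (h k * Y k) +
        sumL (fun l => tensor_eig h l * sumL Y l) (Box m M) * h k) (seq 0 M)).
    2: { rewrite sumL_plus, !sumL_scal; lra. }
    apply sumL_ext. intros k _.
    rewrite sumL_map, Rmult_comm, <- sumL_scal, (Rmult_comm _ (h k)), <- sumL_scal, <- sumL_plus.
    apply sumL_ext. intros l _. simpl. lra. }
  assert (HE : 0 <= E).
  { apply sumL_nonneg; intros; apply Rmult_le_pos;
      [apply tensor_eig_nonneg | apply sumL_nonneg]; auto. }
  rewrite Hstep, S_INR.
  assert (r ^ m <= 1) by (rewrite <- (pow1 m); apply pow_incr; lra).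
  nra.
Qed.

(** * Slowly varying functions *)

Lemma slowly_varying_lower phi : slowly_varying phi -> forall c0, 0 < c0 -> forall e, 0 < e ->
  exists M, forall x, M <= x -> 0 < phi x /\ (1 - e) * phi x < phi (c0 * x).
Proof.
  intros [[T HT] Hsv] c0 Hc0 e He. destruct (Hsv c0 Hc0 e He) as [M HM].
  exists (Rmax M T). intros x Hx.
  assert (Hp : 0 < phi x) by (apply HT; eapply Rle_trans; [apply Rmax_r | eauto]).
  split; auto. specialize (HM x ltac:(eapply Rle_trans; [apply Rmax_l | eauto])).
  apply Rabs_def2 in HM. destruct HM as [_ HM].
  assert (H : 1 - e < phi (c0 * x) / phi x) by lra.
  apply (Rmult_lt_compat_r (phi x)) in H; auto. unfold Rdiv in H.
  rewrite Rmult_assoc, Rinv_l, Rmult_1_r in H; lra.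
Qed.

(* [x phi x] grows by the factor [2 * 2/3] along dyadic points. *)
Lemma xphi_dyadic_unbounded (phi : R -> R) S0 W : 0 < S0 -> 0 < phi S0 ->
  (forall s, S0 <= s -> 2/3 * phi s <= phi (2 * s)) ->
  exists n0, forall j, W <= (S0 * 2 ^ (n0 + j)) * phi (S0 * 2 ^ (n0 + j)).
Proof.
  intros HS0 Hp Hdbl.
  assert (Hgrow : forall j, (4/3) ^ j * (S0 * phi S0) <= (S0 * 2 ^ j) * phi (S0 * 2 ^ j)).
  { induction j; [simpl; rewrite Rmult_1_l, !Rmult_1_r; lra |].
    replace (S0 * 2 ^ S j) with (2 * (S0 * 2 ^ j)) by (simpl; ring).
    assert (1 <= 2 ^ j) by (apply pow_R1_Rle; lra).
    assert (2/3 * phi (S0 * 2 ^ j) <= phi (2 * (S0 * 2 ^ j))) by (apply Hdbl; nra).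
    assert (0 <= S0 * 2 ^ j) by nra.
    simpl. nra. }
  assert (HS0p : 0 < S0 * phi S0) by (apply Rmult_lt_0_compat; auto).
  destruct (INR_unbounded (3 * W / (S0 * phi S0))) as [n0 Hn0]. exists n0. intros j.
  eapply Rle_trans; [| apply Hgrow].
  assert (Hb := bernoulli_ineq (1/3) (n0 + j) ltac:(lra)). replace (1 + 1/3) with (4/3) in Hb by field.
  rewrite plus_INR in Hb. assert (0 <= INR j) by apply pos_INR.
  apply (Rmult_lt_compat_r (S0 * phi S0)) in Hn0; auto. unfold Rdiv in Hn0.
  rewrite Rmult_assoc, Rinv_l, Rmult_1_r in Hn0 by lra. nra.
Qed.

Lemma dyadic_level_crossing (phi : R -> R) X1 d A : 0 < X1 -> 0 < d -> 0 < A ->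
  (forall x x', 0 <= x -> x <= x' -> phi x' <= phi x) ->
  (forall z, 0 < z -> exists x, 0 <= x /\ phi x < z) -> A < d * phi X1 ->
  exists j, d * phi (X1 * 2 ^ S j) <= A /\ A < d * phi (X1 * 2 ^ j).
Proof.
  intros HX1 Hd HA0 Hmono Hinf HA.
  destruct (Hinf (A / d)) as [xs [Hxs Hxs2]]; [apply Rdiv_lt_0_compat; auto |].
  destruct (INR_unbounded (xs / X1)) as [n Hn].
  assert (Hbelow : exists j, d * phi (X1 * 2 ^ j) <= A).
  { exists n. assert (xs <= X1 * 2 ^ n).
    { assert (H := poly n 1 Rlt_0_1). replace (1 + 1) with 2 in H by ring.
      apply (Rmult_lt_compat_r X1) in Hn; auto. unfold Rdiv in Hn.
      rewrite Rmult_assoc, Rinv_l, Rmult_1_r in Hn by lra. nra. }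
    assert (phi (X1 * 2 ^ n) <= phi xs) by (apply Hmono; auto).
    apply (Rmult_lt_compat_l d) in Hxs2; auto. unfold Rdiv in Hxs2.
    rewrite (Rmult_comm A), <- Rmult_assoc, Rinv_r, Rmult_1_l in Hxs2 by lra. nra. }
  destruct (least_witness _ Hbelow) as [[| j] [Hj Hj']].
  - simpl in Hj. rewrite Rmult_1_r in Hj. lra.
  - exists j. split; auto. apply Rnot_le_lt, Hj'. lia.
Qed.

(* Since [x phi x] grows along dyadic points, the crossing of [d * phi] through level [A]
   happens where [x phi x] is already large. *)
Lemma slowly_varying_level_set phi : slowly_varying phi ->
  (forall x x', 0 <= x -> x <= x' -> phi x' <= phi x) ->
  (forall z, 0 < z -> exists x, 0 <= x /\ phi x < z) ->
  forall A eta W xmin, 0 < A -> 0 < eta < 1 -> exists D, forall d, D <= d ->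
  exists x, xmin <= x /\ (1 - eta) * A < d * phi x /\ d * phi x <= A /\ W <= x * phi x.
Proof.
  intros Hsv Hmono Hinf A eta W xmin HA Heta.
  destruct (slowly_varying_lower phi Hsv 2 ltac:(lra) (1/3) ltac:(lra)) as [M2 HM2].
  destruct (slowly_varying_lower phi Hsv 2 ltac:(lra) eta ltac:(lra)) as [Me HMe].
  set (S0 := Rmax (Rmax xmin 1) (Rmax M2 Me)).
  assert (HS0 : xmin <= S0 /\ 1 <= S0 /\ M2 <= S0 /\ Me <= S0).
  { assert (H1 := Rmax_l xmin 1). assert (H2 := Rmax_r xmin 1).
    assert (H3 := Rmax_l M2 Me). assert (H4 := Rmax_r M2 Me).
    assert (H5 := Rmax_l (Rmax xmin 1) (Rmax M2 Me)). assert (H6 := Rmax_r (Rmax xmin 1) (Rmax M2 Me)).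
    unfold S0. lra. }
  destruct HS0 as [HSS0 [HS01 [HM2S0 HMeS0]]].
  assert (Hpos : forall x, S0 <= x -> 0 < phi x) by (intros; apply HM2; lra).
  destruct (xphi_dyadic_unbounded phi S0 W ltac:(lra) ltac:(apply Hpos; lra)
              ltac:(intros s Hs; destruct (HM2 s ltac:(lra)); lra)) as [n0 Hn0].
  set (X1 := S0 * 2 ^ n0).
  assert (HW : forall j, W <= (X1 * 2 ^ j) * phi (X1 * 2 ^ j)).
  { intros j. replace (X1 * 2 ^ j) with (S0 * 2 ^ (n0 + j)) by (unfold X1; rewrite pow_add; ring).
    apply Hn0. }
  assert (Hpow : forall j, 1 <= 2 ^ j) by (intros; apply pow_R1_Rle; lra).
  assert (HX1 : S0 <= X1) by (unfold X1; specialize (Hpow n0); nra).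
  exists (A / phi X1 + 1). intros d Hd.
  assert (HpX1 : 0 < phi X1) by (apply Hpos; lra).
  assert (HdA : A < d * phi X1).
  { assert (A / phi X1 < d) by lra. apply (Rmult_lt_compat_r (phi X1)) in H; auto.
    unfold Rdiv in H. rewrite Rmult_assoc, Rinv_l, Rmult_1_r in H by lra. lra. }
  assert (Hd0 : 0 < d) by (assert (0 < A / phi X1) by (apply Rdiv_lt_0_compat; auto); lra).
  destruct (dyadic_level_crossing phi X1 d A ltac:(lra) Hd0 HA Hmono Hinf HdA) as [j [Hj1 Hj2]].
  exists (X1 * 2 ^ S j).
  assert (Hx2 : X1 * 2 ^ S j = 2 * (X1 * 2 ^ j)) by (simpl; ring).
  assert (HXj : X1 <= X1 * 2 ^ j) by (specialize (Hpow j); nra).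
  split; [rewrite Hx2; lra |]. split; [| split; auto].
  destruct (HMe (X1 * 2 ^ j) ltac:(lra)) as [Hp Hstep]. rewrite Hx2. nra.
Qed.

(* With [a = - ln (1 - eps ^ 2)], take [A < a < b] around [a] with ratio [b / A] still below
   [(1 - eta) ^ 3 c]. *)
Lemma rapid_variation_constants eps c : 0 < eps < 1 -> 1 < c ->
  exists eta A b, 0 < eta < 1 /\ 0 < A /\ 1 - exp (- A) < eps ^ 2 /\
    eps ^ 2 < 1 - exp (- b) /\ b <= (1 - eta) ^ 3 * c * A.
Proof.
  intros Heps Hc.
  assert (He2 : 0 < 1 - eps ^ 2 < 1) by (simpl; nra).
  set (a := - ln (1 - eps ^ 2)).
  assert (Hea : exp (- a) = 1 - eps ^ 2) by (unfold a; rewrite Ropp_involutive, exp_ln; lra).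
  assert (Ha : 0 < a).
  { unfold a. assert (Hln : ln (1 - eps ^ 2) < ln 1) by (apply ln_increasing; lra).
    rewrite ln_1 in Hln. lra. }
  clearbody a.
  set (q := (c + 1) / 2).
  exists ((c - 1) / (6 * c)), (a * (1 + q) / (2 * q)), (a * (1 + q) / 2).
  assert (Heta : 0 < (c - 1) / (6 * c) < 1).
  { split; [apply Rdiv_lt_0_compat; lra |]. apply Rmult_lt_reg_r with (6 * c); [lra |].
    unfold Rdiv. rewrite Rmult_assoc, Rinv_l, Rmult_1_l, Rmult_1_r; lra. }
  assert (HAa : a * (1 + q) / (2 * q) < a).
  { apply Rmult_lt_reg_r with (2 * q); [unfold q; lra |].
    unfold Rdiv. rewrite Rmult_assoc, Rinv_l, Rmult_1_r by (unfold q; lra). unfold q. nra. }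
  split; [exact Heta |]. repeat split.
  - apply Rdiv_lt_0_compat; unfold q; nra.
  - assert (exp (- a) < exp (- (a * (1 + q) / (2 * q)))) by (apply exp_increasing; lra). lra.
  - assert (0 < a * (c - 1)) by (apply Rmult_lt_0_compat; lra).
    replace (a * (1 + q) / 2) with (a + a * (c - 1) / 4) by (unfold q; field).
    assert (exp (- (a + a * (c - 1) / 4)) < exp (- a)) by (apply exp_increasing; lra). lra.
  - set (eta := (c - 1) / (6 * c)) in *.
    assert (Hq : q <= (1 - eta) ^ 3 * c).
    { assert (1 - 3 * eta <= (1 - eta) ^ 3) by (simpl; nra).
      assert ((1 - 3 * eta) * c = q) by (unfold eta, q; field; lra). nra. }
    replace (a * (1 + q) / 2) with (q * (a * (1 + q) / (2 * q))) by (field; unfold q; lra).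
    apply Rmult_le_compat_r; [| exact Hq]. apply Rlt_le, Rdiv_lt_0_compat; unfold q; nra.
Qed.

(** * Splitting the spectrum at level [exp (- x)] *)

Definition eig_lt (p : nat -> R) (x : R) (k : nat) : R :=
  if Rlt_dec (p k) (exp (- x)) then p k else 0.

Definition eig_ge (p : nat -> R) (x : R) (k : nat) : R :=
  if Rle_dec (exp (- x)) (p k) then p k else 0.

Lemma eig_lt_ge p x k : eig_lt p x k + eig_ge p x k = p k.
Proof. unfold eig_lt, eig_ge. destruct (Rlt_dec _ _), (Rle_dec _ _); lra. Qed.

Lemma eig_lt_nonneg p x k : 0 <= p k -> 0 <= eig_lt p x k.
Proof. unfold eig_lt; destruct (Rlt_dec _ _); lra. Qed.

Lemma eig_ge_nonneg p x k : 0 <= p k -> 0 <= eig_ge p x k.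
Proof. unfold eig_ge; destruct (Rle_dec _ _); lra. Qed.

(* If some eigenvalue vanished, [phi] would vanish from some point on. *)
Lemma eig_pos (p : nat -> R) (phi : R -> R) :
  (forall k, 0 <= p k) -> (forall k, p (S k) <= p k) -> 0 < p 0%nat ->
  (forall x, 0 <= x -> infinite_sum (eig_lt p x) (phi x)) ->
  (exists T, forall x, T <= x -> 0 < phi x) -> forall k, 0 < p k.
Proof.
  intros Hp Hm H0 Hphi [T HT] k. induction k as [|k IHk]; auto.
  destruct (Rlt_dec 0 (p (S k))) as [| Hzero]; auto. exfalso.
  set (x := Rmax T (Rmax 0 (- ln (p k)))).
  assert (HxT : T <= x) by apply Rmax_l.
  assert (Hx0 : 0 <= x) by (eapply Rle_trans; [| apply Rmax_r]; apply Rmax_l).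
  assert (Hex : exp (- x) <= p k).
  { apply exp_neg_le_iff; auto. eapply Rle_trans; [| apply Rmax_r]; apply Rmax_r. }
  assert (phi x = 0).
  { apply (infinite_sum_const0 (eig_lt p x)); auto. intros j. unfold eig_lt.
    destruct (Rlt_dec (p j) (exp (- x))); auto.
    destruct (Nat.le_gt_cases j k).
    - assert (p k <= p j) by (apply noninc_le; auto). lra.
    - assert (p j <= p (S k)) by (apply noninc_le; auto; lia). specialize (Hp j). lra. }
  specialize (HT x HxT). lra.
Qed.

Definition tensor_eig_lt (p : nat -> R) (u : R) (l : list nat) : R :=
  if Rlt_dec (tensor_eig p l) (exp (- u)) then tensor_eig p l else 0.

Section Spectrum.

Variables (p : nat -> R) (phi : R -> R).
Hypothesis p_pos : forall k, 0 < p k.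
Hypothesis p_le1 : forall k, p k <= 1.
Hypothesis p_sum : infinite_sum p 1.
Hypothesis phi_sum : forall x, 0 <= x -> infinite_sum (eig_lt p x) (phi x).

Let p_nonneg k : 0 <= p k := Rlt_le _ _ (p_pos k).

Lemma eig_ge_sum x : 0 <= x -> infinite_sum (eig_ge p x) (1 - phi x).
Proof.
  intros Hx. apply infinite_sum_ext with (fun k => p k - eig_lt p x k).
  - intros k. rewrite <- (eig_lt_ge p x k). ring.
  - apply infinite_sum_minus; auto.
Qed.

Lemma phi_nonneg x : 0 <= x -> 0 <= phi x.
Proof.
  intros Hx. apply (infinite_sum_le (fun _ => 0) (eig_lt p x)); auto.
  - intros; apply eig_lt_nonneg; auto.
  - intros e He; exists O; intros n _. unfold R_dist.
    rewrite sum_eq_R0 by auto. rewrite Rminus_0_r, Rabs_R0; lra.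
Qed.

Lemma phi_le1 x : 0 <= x -> phi x <= 1.
Proof.
  intros Hx. apply (infinite_sum_le (eig_lt p x) p); auto.
  intros k; unfold eig_lt; destruct (Rlt_dec _ _); [lra | apply p_nonneg].
Qed.

Lemma phi_noninc x x' : 0 <= x -> x <= x' -> phi x' <= phi x.
Proof.
  intros Hx Hxx. apply (infinite_sum_le (eig_lt p x') (eig_lt p x)); auto; [| apply phi_sum; lra].
  intros k. unfold eig_lt. assert (exp (- x') <= exp (- x)) by (apply exp_le_exp_of_le; lra).
  destruct (Rlt_dec (p k) (exp (- x'))), (Rlt_dec (p k) (exp (- x))); try lra.
  apply p_nonneg.
Qed.

Lemma sumL_p_le1 M : sumL p (seq 0 M) <= 1.
Proof. apply sumL_seq_le_infinite_sum; auto. Qed.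

Lemma sumL_eig_lt_le x M : 0 <= x -> sumL (eig_lt p x) (seq 0 M) <= phi x.
Proof. intros. apply sumL_seq_le_infinite_sum; auto. intros; apply eig_lt_nonneg; auto. Qed.

Lemma sumL_eig_ge_le x M : 0 <= x -> sumL (eig_ge p x) (seq 0 M) <= 1 - phi x.
Proof.
  intros. apply sumL_seq_le_infinite_sum; [intros; apply eig_ge_nonneg; auto |].
  apply eig_ge_sum; auto.
Qed.

(* Cutting at the level [p N] keeps the mass of [p 0], ..., [p N]. *)
Lemma phi_inf0 : (forall k, p (S k) <= p k) -> forall z, 0 < z -> exists x, 0 <= x /\ phi x < z.
Proof.
  intros Hm z Hz. destruct (p_sum z Hz) as [N HN]. specialize (HN N (le_n N)).
  unfold R_dist in HN. apply Rabs_def2 in HN.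
  set (x := - ln (p N)). exists x.
  assert (Hx : 0 <= x) by (unfold x; assert (ln (p N) <= 0) by (apply ln_nonpos; auto); lra).
  split; auto.
  assert (E : sum_f_R0 (eig_ge p x) N = sum_f_R0 p N).
  { apply sum_eq. intros i Hi. unfold eig_ge, x. rewrite Ropp_involutive, exp_ln by auto.
    destruct (Rle_dec (p N) (p i)) as [| Hn]; auto. exfalso. apply Hn, noninc_le; auto. }
  assert (sum_f_R0 (eig_ge p x) N <= 1 - phi x).
  { apply sum_f_R0_le_infinite_sum; [intros; apply eig_ge_nonneg; auto | apply eig_ge_sum; auto]. }
  lra.
Qed.

Lemma eig_ge_log_le x k : 0 <= x -> eig_ge p x k * - ln (p k) <= x * p k.
Proof.
  intros Hx. assert (Hk := p_pos k). unfold eig_ge. destruct (Rle_dec _ _) as [r | r].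
  - apply exp_neg_le_iff in r; auto. nra.
  - nra.
Qed.

Lemma eig_ge_log_split x k : 0 <= x ->
  eig_ge p x k * - ln (p k) <= eig_ge p (x / 2) k * - ln (p k) + x * eig_lt p (x / 2) k.
Proof.
  intros Hx. assert (Hexp : exp (- x) <= exp (- (x / 2))) by (apply exp_le_exp_of_le; lra).
  destruct (Rle_dec (exp (- (x / 2))) (p k)) as [r | r].
  - unfold eig_ge, eig_lt.
    destruct (Rle_dec (exp (- x)) (p k)); [| lra].
    destruct (Rle_dec (exp (- (x / 2))) (p k)); [| lra].
    destruct (Rlt_dec (p k) (exp (- (x / 2)))); [lra |]. rewrite Rmult_0_r. lra.
  - assert (Hge : eig_ge p (x / 2) k = 0) by (unfold eig_ge; destruct (Rle_dec _ _); lra).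
    assert (Hlt : eig_lt p (x / 2) k = p k) by (unfold eig_lt; destruct (Rlt_dec _ _); lra).
    rewrite Hge, Hlt. assert (Hle := eig_ge_log_le x k Hx). lra.
Qed.

(* The doubling bound [phi s <= 3/2 phi (2 s)] lets the estimate pass from [x/2] to [x]. *)
Lemma sumL_eig_ge_log_le X0 M : 0 < X0 -> (forall s, X0 <= s -> phi s <= 3/2 * phi (2 * s)) ->
  forall x, 0 <= x ->
  sumL (fun k => eig_ge p x k * - ln (p k)) (seq 0 M) <= 6 * x * phi x + 2 * X0.
Proof.
  intros HX0 Hdbl.
  set (S x := sumL (fun k => eig_ge p x k * - ln (p k)) (seq 0 M)).
  assert (Hsmall : forall x, 0 <= x -> x <= 2 * X0 -> S x <= 6 * x * phi x + 2 * X0).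
  { intros x Hx Hx2. assert (0 <= phi x) by (apply phi_nonneg; auto).
    apply Rle_trans with (sumL (fun k => x * p k) (seq 0 M)).
    - apply sumL_le; intros; apply eig_ge_log_le; auto.
    - rewrite sumL_scal. assert (Hq := sumL_p_le1 M).
      assert (0 <= sumL p (seq 0 M)) by (apply sumL_nonneg; auto). nra. }
  assert (Hdyadic : forall J x, 0 <= x -> x < X0 * 2 ^ J -> S x <= 6 * x * phi x + 2 * X0).
  { induction J as [|J IH]; intros x Hx HxJ.
    { simpl in HxJ. apply Hsmall; lra. }
    destruct (Rle_lt_dec x (2 * X0)) as [Hx2 | Hx2]; [apply Hsmall; auto |].
    assert (Hsplit : S x <= S (x / 2) + x * phi (x / 2)).
    { apply Rle_trans with (sumL (fun k => eig_ge p (x / 2) k * - ln (p k)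
                                            + x * eig_lt p (x / 2) k) (seq 0 M)).
      - apply sumL_le; intros; apply eig_ge_log_split; auto.
      - rewrite sumL_plus, sumL_scal. unfold S.
        assert (sumL (eig_lt p (x / 2)) (seq 0 M) <= phi (x / 2)) by (apply sumL_eig_lt_le; lra).
        nra. }
    assert (IHx := IH (x / 2) ltac:(lra) ltac:(simpl in HxJ; lra)).
    assert (phi (x / 2) <= 3/2 * phi x) by (replace x with (2 * (x / 2)) at 2 by field; apply Hdbl; lra).
    nra. }
  intros x Hx. destruct (INR_unbounded (x / X0)) as [n Hn]. apply (Hdyadic n x Hx).
  assert (H2n := poly n 1 Rlt_0_1). replace (1 + 1) with 2 in H2n by ring.
  apply (Rmult_lt_compat_l X0) in Hn; auto. unfold Rdiv in Hn.
  rewrite <- Rmult_assoc, (Rmult_comm X0 x), Rmult_assoc, Rinv_r, Rmult_1_r in Hn by lra.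
  nra.
Qed.

Lemma tensor_eig_eig_ge_cases x l :
  tensor_eig (eig_ge p x) l = tensor_eig p l \/
  (tensor_eig (eig_ge p x) l = 0 /\ tensor_eig p l < exp (- x)).
Proof.
  induction l as [|k l IH]; [left; reflexivity |]. rewrite !tensor_eig_cons.
  assert (Hg0 := tensor_eig_pos p l p_pos). assert (Hg1 := tensor_eig_le1 p l p_pos p_le1).
  assert (Hk0 := p_pos k). assert (Hk1 := p_le1 k).
  assert (Hk : eig_ge p x k = p k \/ (eig_ge p x k = 0 /\ p k < exp (- x))).
  { unfold eig_ge. destruct (Rle_dec _ _); [left | right]; auto. split; auto; lra. }
  destruct Hk as [Hk | [Hk Hk']]; rewrite Hk.
  - destruct IH as [E | [E1 E2]]; [left; rewrite E; auto |].
    right; split; [rewrite E1; ring | nra].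
  - right. split; [ring | nra].
Qed.

(* A Markov-type bound: [tensor_eig p l < exp (- u)] means [sumL (- ln p) l > u]. *)
Lemma tensor_eig_lt_le x u l : 0 < u ->
  tensor_eig_lt p u l <= (tensor_eig p l - tensor_eig (eig_ge p x) l)
                         + tensor_eig (eig_ge p x) l * sumL (fun k => - ln (p k)) l / u.
Proof.
  intros Hu. assert (Hg := tensor_eig_pos p l p_pos).
  set (Y := sumL (fun k => - ln (p k)) l).
  assert (HY : 0 <= Y).
  { apply sumL_nonneg; intros k. assert (ln (p k) <= 0) by (apply ln_nonpos; auto). lra. }
  assert (HYu : 0 <= Y / u)
    by (unfold Rdiv; apply Rmult_le_pos; [lra | left; apply Rinv_0_lt_compat; lra]).
  unfold tensor_eig_lt. destruct (tensor_eig_eig_ge_cases x l) as [E | [E1 E2]]; rewrite ?E, ?E1.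
  - destruct (Rlt_dec _ _) as [r | r]; [| nra].
    apply ln_increasing in r; auto. rewrite ln_exp, ln_tensor_eig in r by auto. fold Y in r.
    assert (1 < Y / u)
      by (apply Rmult_lt_reg_r with u; auto; unfold Rdiv; rewrite Rmult_assoc, Rinv_l; lra).
    unfold Rdiv in *. nra.
  - destruct (Rlt_dec _ _); lra.
Qed.

Lemma sumL_Box_tensor_eig_lt_le X0 x u m M :
  0 < X0 -> (forall s, X0 <= s -> phi s <= 3/2 * phi (2 * s)) -> 0 <= x -> 0 < u ->
  sumL (tensor_eig_lt p u) (Box m M)
    <= 1 - (1 - phi x) ^ m + INR m * (6 * x * phi x + 2 * X0) / u.
Proof.
  intros HX0 Hdbl Hx Hu.
  eapply Rle_trans; [apply sumL_le; intros l _; apply (tensor_eig_lt_le x u l Hu) |].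
  rewrite sumL_plus, sumL_minus, !sumL_Box_tensor_eig.
  rewrite (sumL_ext _ (fun l => / u * (tensor_eig (eig_ge p x) l * sumL (fun k => - ln (p k)) l)))
    by (intros; unfold Rdiv; ring).
  rewrite sumL_scal.
  set (q := sumL p (seq 0 M)). set (r := sumL (eig_ge p x) (seq 0 M)).
  assert (Hqr : q - r = sumL (eig_lt p x) (seq 0 M)).
  { unfold q, r. rewrite <- sumL_minus. apply sumL_ext. intros k _. rewrite <- (eig_lt_ge p x k). ring. }
  assert (Hlt : sumL (eig_lt p x) (seq 0 M) <= phi x) by (apply sumL_eig_lt_le; auto).
  assert (Hlt0 : 0 <= sumL (eig_lt p x) (seq 0 M))
    by (apply sumL_nonneg; intros; apply eig_lt_nonneg; auto).
  assert (Hq : q <= 1) by apply sumL_p_le1.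
  assert (Hr0 : 0 <= r) by (apply sumL_nonneg; intros; apply eig_ge_nonneg; auto).
  assert (Hpow : q ^ m - r ^ m <= 1 - (1 - phi x) ^ m).
  { assert (H := pow_sub_pow_le (q - r) q m ltac:(lra) ltac:(lra) Hq).
    replace (q - (q - r)) with r in H by ring.
    assert (phi x <= 1) by (apply phi_le1; auto).
    assert ((1 - phi x) ^ m <= (1 - (q - r)) ^ m) by (apply pow_incr; lra).
    lra. }
  assert (Hlog : sumL (fun l => tensor_eig (eig_ge p x) l * sumL (fun k => - ln (p k)) l) (Box m M)
                 <= INR m * (6 * x * phi x + 2 * X0)).
  { eapply Rle_trans.
    - apply sumL_Box_tensor_eig_sumL; [intros; apply eig_ge_nonneg; auto | | unfold r in *; lra].
      intros k. assert (ln (p k) <= 0) by (apply ln_nonpos; auto). lra.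
    - apply Rmult_le_compat_l; [apply pos_INR |]. apply sumL_eig_ge_log_le; auto. }
  assert (0 < / u) by (apply Rinv_0_lt_compat; auto).
  unfold Rdiv. rewrite (Rmult_comm (INR m * _)). nra.
Qed.

Lemma sumL_Box_tensor_eig_lt_ge t m M : 0 <= t ->
  (sumL p (seq 0 M)) ^ m - (1 - phi t) ^ m <= sumL (tensor_eig_lt p t) (Box m M).
Proof.
  intros Ht.
  assert (H : sumL (fun l => tensor_eig p l - tensor_eig (eig_ge p t) l) (Box m M)
              <= sumL (tensor_eig_lt p t) (Box m M)).
  { apply sumL_le. intros l _. unfold tensor_eig_lt.
    assert (0 < tensor_eig p l) by (apply tensor_eig_pos; auto).
    destruct (tensor_eig_eig_ge_cases t l) as [E | [E1 E2]]; rewrite ?E, ?E1;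
      destruct (Rlt_dec _ _); lra. }
  rewrite sumL_minus, !sumL_Box_tensor_eig in H.
  assert (sumL (eig_ge p t) (seq 0 M) <= 1 - phi t) by (apply sumL_eig_ge_le; auto).
  assert (0 <= sumL (eig_ge p t) (seq 0 M)) by (apply sumL_nonneg; intros; apply eig_ge_nonneg; auto).
  assert (sumL (eig_ge p t) (seq 0 M) ^ m <= (1 - phi t) ^ m) by (apply pow_incr; lra).
  lra.
Qed.


Section Rearrangement.

Variables (d : nat) (mu : nat -> R) (eps : R) (n : nat).
Hypothesis mu_rearr : is_noninc_rearr (tensor_eig p) d mu.
Hypothesis n_complexity : is_approx_complexity mu eps n.

Lemma rearr_index : exists tau : list nat -> nat,
  (forall l, length l = d -> mu (tau l) = tensor_eig p l) /\
  (forall l l', length l = d -> length l' = d -> tau l = tau l' -> l = l').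
Proof.
  destruct mu_rearr as [_ [_ [sigma [Hs1 [_ Hs3]]]]].
  set (tau l := epsilon (inhabits O) (fun k => 0 < mu k /\ sigma k = l)).
  assert (Htau : forall l, length l = d -> 0 < mu (tau l) /\ sigma (tau l) = l).
  { intros l Hl. apply (epsilon_spec (inhabits O) (fun k => 0 < mu k /\ sigma k = l)).
    apply Hs3; auto. apply tensor_eig_pos; auto. }
  exists tau. split.
  - intros l Hl. destruct (Htau l Hl) as [H1 H2]. rewrite <- H2 at 2. apply Hs1; auto.
  - intros l l' Hl Hl' E. rewrite <- (proj2 (Htau l Hl)), <- (proj2 (Htau l' Hl')), E. reflexivity.
Qed.

(* The [k + 1] multi-indices [i :: 0 :: ... :: 0], [i <= k], carry positive eigenvalues. *)
Lemma rearr_pos : (1 <= d)%nat -> forall k, 0 < mu k.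
Proof.
  intros Hd k0. destruct mu_rearr as [Hnn [Hm _]].
  destruct (Rlt_dec 0 (mu k0)) as [| Hn]; auto. exfalso.
  destruct rearr_index as [tau [Htau Hinj]].
  set (li i := i :: repeat O (d - 1)).
  assert (Hli : forall i, length (li i) = d) by (intros; simpl; rewrite repeat_length; lia).
  set (J := map (fun i => tau (li i)) (seq 0 (S k0))).
  assert (HND : NoDup J).
  { apply Injective_map_NoDup_in; [| apply seq_NoDup]. intros x y _ _ E.
    assert (E' : li x = li y) by (apply Hinj; auto). inversion E'; auto. }
  assert (Hincl : incl J (seq 0 k0)).
  { intros j Hj. apply in_map_iff in Hj. destruct Hj as [i [<- _]]. apply in_seq.
    split; [lia |]. destruct (Nat.lt_ge_cases (tau (li i)) k0) as [| Hge]; auto. exfalso.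
    assert (mu (tau (li i)) <= mu k0) by (apply noninc_le; auto).
    assert (0 < tensor_eig p (li i)) by (apply tensor_eig_pos; auto).
    rewrite Htau in *; auto. lra. }
  assert (HL := NoDup_incl_length HND Hincl).
  unfold J in HL. rewrite length_map, !length_seq in HL. lia.
Qed.

(* A box eigenvalue below [exp (- t)] of rank [< n] is at most [exp (- t)]; those of rank [>= n]
   lie in the tail. *)
Lemma sumL_Box_tensor_eig_lt_complexity t M :
  sumL (tensor_eig_lt p t) (Box d M) <= INR n * exp (- t) + eps ^ 2.
Proof.
  destruct n_complexity as [[s [Hs Hse]] _].
  destruct mu_rearr as [Hnn _].
  destruct rearr_index as [tau [Htau Hinj]].
  set (F j := if Compare_dec.lt_dec j n then exp (- t) else mu j).
  assert (HF0 : forall j, 0 <= F j).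
  { intros j; unfold F; destruct (Compare_dec.lt_dec _ _); [left; apply exp_pos | auto]. }
  destruct (list_nat_bounded (map tau (Box d M))) as [K HK].
  apply Rle_trans with (sumL (fun l => F (tau l)) (Box d M)).
  { apply sumL_le. intros l Hl. unfold tensor_eig_lt, F. rewrite <- Htau by (eapply Box_length; eauto).
    assert (0 < exp (- t)) by apply exp_pos.
    destruct (Rlt_dec _ _), (Compare_dec.lt_dec _ _); lra. }
  apply Rle_trans with (sumL F (seq 0 (n + K))).
  { apply sumL_le_injective; auto using Box_NoDup.
    - intros x y Hx Hy. apply Hinj; eapply Box_length; eauto.
    - intros x Hx. apply in_seq. enough (tau x < K)%nat by lia.
      apply HK, in_map; auto. }
  rewrite seq_app, sumL_app, Nat.add_0_l.
  rewrite (sumL_ext F (fun _ => exp (- t))), sumL_const, length_seq.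
  2: { intros j Hj. apply in_seq in Hj. unfold F. destruct (Compare_dec.lt_dec _ _); auto; lia. }
  rewrite (sumL_ext F mu), <- sumL_seq_shift.
  2: { intros j Hj. apply in_seq in Hj. unfold F. destruct (Compare_dec.lt_dec _ _); auto; lia. }
  assert (sumL (fun j => mu (n + j)%nat) (seq 0 K) <= s) by (apply sumL_seq_le_infinite_sum; auto).
  lra.
Qed.

Lemma sumL_rearr_le_Box : (1 <= d)%nat -> forall L, NoDup L -> exists M,
  forall h : R -> R, (forall v, 0 < v -> 0 <= h v) ->
  sumL (fun j => h (mu j)) L <= sumL (fun l => h (tensor_eig p l)) (Box d M).
Proof.
  intros Hd L HL. assert (Hpos := rearr_pos Hd).
  destruct mu_rearr as [_ [_ [sigma [Hs1 [Hs2 _]]]]].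
  destruct (list_nat_bounded (concat (map sigma L))) as [M HM].
  exists M. intros h Hh.
  rewrite (sumL_ext _ (fun j => h (tensor_eig p (sigma j))))
    by (intros j _; destruct (Hs1 j (Hpos j)) as [_ ->]; reflexivity).
  apply (sumL_le_injective sigma L (Box d M) (fun l => h (tensor_eig p l))); auto.
  - intros j Hj. apply In_Box; [apply Hs1; auto |].
    intros k Hk. apply HM, in_concat. exists (sigma j). split; auto. apply in_map; auto.
  - intros l. apply Hh, tensor_eig_pos; auto.
Qed.

Lemma count_eig_ge : (1 <= d)%nat -> forall u N,
  (forall k, (k < N)%nat -> exp (- u) <= mu k) -> INR N * exp (- u) <= 1.
Proof.
  intros Hd u N HN. destruct (sumL_rearr_le_Box Hd (seq 0 N) (seq_NoDup _ _)) as [M HM].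
  assert (Hmass : sumL mu (seq 0 N) <= sumL (tensor_eig p) (Box d M))
    by exact (HM (fun v => v) (fun v Hv => Rlt_le _ _ Hv)).
  rewrite sumL_Box_tensor_eig in Hmass.
  assert (sumL p (seq 0 M) ^ d <= 1).
  { rewrite <- (pow1 d). apply pow_incr. split; [apply sumL_nonneg; auto | apply sumL_p_le1]. }
  assert (sumL (fun _ => exp (- u)) (seq 0 N) <= sumL mu (seq 0 N)).
  { apply sumL_le. intros j Hj. apply in_seq in Hj. apply HN; lia. }
  rewrite sumL_const, length_seq in *. lra.
Qed.

Lemma tail_le_of_Box : (1 <= d)%nat -> forall u N0,
  (forall j, (N0 <= j)%nat -> mu j < exp (- u)) ->
  (forall M, sumL (tensor_eig_lt p u) (Box d M) <= eps ^ 2) -> tail_le mu N0 eps.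
Proof.
  intros Hd u N0 Hsmall HBox. destruct mu_rearr as [Hnn _].
  assert (Hpartial : forall J, sum_f_R0 (fun j => mu (N0 + j)%nat) J <= eps ^ 2).
  { intros J. rewrite sum_f_R0_sumL, sumL_seq_shift.
    destruct (sumL_rearr_le_Box Hd (seq N0 (S J)) (seq_NoDup _ _)) as [M HM].
    eapply Rle_trans; [| apply (HBox M)].
    specialize (HM (fun v => if Rlt_dec v (exp (- u)) then v else 0)).
    rewrite (sumL_ext _ mu) in HM; [apply HM; intros v Hv; destruct (Rlt_dec _ _); lra |].
    intros j Hj. apply in_seq in Hj. destruct (Rlt_dec _ _) as [| Hn]; auto.
    exfalso. apply Hn, Hsmall. lia. }
  destruct (growing_cv (sum_f_R0 (fun j => mu (N0 + j)%nat))) as [s Hs].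
  - intros J. simpl. specialize (Hnn (N0 + S J)%nat). lra.
  - exists (eps ^ 2). intros x [J ->]. apply Hpartial.
  - exists s. split; [exact Hs |].
    apply (Rle_cv_lim (Un := sum_f_R0 (fun j => mu (N0 + j)%nat)) (Vn := fun _ => eps ^ 2)); auto.
    intros e He. exists O. intros m _. unfold R_dist. rewrite Rminus_diag, Rabs_R0. exact He.
Qed.

(* At most [exp u] eigenvalues reach [exp (- u)], and the rest have tail sum at most [eps ^ 2]. *)
Lemma ln_complexity_le_of_Box : (1 <= d)%nat -> forall u, 0 < u ->
  (forall M, sumL (tensor_eig_lt p u) (Box d M) <= eps ^ 2) -> ln (INR n) <= u.
Proof.
  intros Hd u Hu HBox. destruct mu_rearr as [_ [Hm _]].
  assert (Hex : exists k, mu k < exp (- u)).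
  { apply NNPP. intros Hnone. destruct (INR_unbounded (exp u)) as [N HN].
    assert (INR N * exp (- u) <= 1).
    { apply (count_eig_ge Hd). intros k _. apply Rnot_lt_le. intros H. apply Hnone; eauto. }
    assert (exp u * exp (- u) < INR N * exp (- u)) by (apply Rmult_lt_compat_r; auto; apply exp_pos).
    rewrite <- exp_plus, Rplus_opp_r, exp_0 in *. lra. }
  destruct (least_witness _ Hex) as [N0 [HN0 HN0']].
  assert (Hcount : INR N0 * exp (- u) <= 1).
  { apply (count_eig_ge Hd). intros k Hk. apply Rnot_lt_le, HN0'; auto. }
  assert (HnN0 : (n <= N0)%nat).
  { destruct (Nat.le_gt_cases n N0) as [| Hlt]; auto. exfalso. apply (proj2 n_complexity N0 Hlt).
    apply (tail_le_of_Box Hd u); auto.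
    intros j Hj. assert (mu j <= mu N0) by (apply noninc_le; auto). lra. }
  assert (Hn : INR n <= exp u).
  { apply le_INR in HnN0. rewrite exp_Ropp in Hcount.
    apply (Rmult_le_compat_r (exp u)) in Hcount; [| left; apply exp_pos].
    rewrite Rmult_assoc, Rinv_l, Rmult_1_r, Rmult_1_l in Hcount by apply exp_neq_0. lra. }
  destruct (Rlt_dec 0 (INR n)) as [Hpos | Hpos].
  - rewrite <- (ln_exp u). apply ln_le_ln; auto.
  - unfold ln. destruct (Rlt_dec 0 (INR n)); [contradiction | lra].
Qed.

(* Most of the mass sits on the first [N] eigenvalues; the small eigenvalues of the box then
   force at least [dl * exp t] indices below the complexity threshold. *)
Lemma ln_complexity_ge_of_phi : (1 <= d)%nat -> forall t dl, 0 <= t -> 0 < dl ->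
  eps ^ 2 + 2 * dl <= 1 - (1 - phi t) ^ d -> t + ln dl <= ln (INR n).
Proof.
  intros Hd t dl Ht Hdl Hgap.
  assert (HdR : 1 <= INR d) by (apply (le_INR 1); auto).
  destruct (p_sum (dl / (2 * INR d))) as [N HN]; [apply Rdiv_lt_0_compat; lra |].
  specialize (HN N (le_n N)). unfold R_dist in HN. apply Rabs_def2 in HN.
  set (q := sumL p (seq 0 (S N))).
  assert (Hq : q = sum_f_R0 p N) by (unfold q; rewrite sum_f_R0_sumL; auto).
  assert (Hq1 : q <= 1) by apply sumL_p_le1.
  assert (Hq0 : 0 <= q) by (apply sumL_nonneg; auto).
  assert (Hqd : 1 - dl / 2 < q ^ d).
  { assert (Hb := bernoulli_ineq (q - 1) d ltac:(lra)). replace (1 + (q - 1)) with q in Hb by ring.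
    assert (INR d * (1 - q) < INR d * (dl / (2 * INR d))) by (apply Rmult_lt_compat_l; lra).
    replace (INR d * (dl / (2 * INR d))) with (dl / 2) in * by (field; lra). lra. }
  assert (H1 := sumL_Box_tensor_eig_lt_ge t d (S N) Ht).
  assert (H2 := sumL_Box_tensor_eig_lt_complexity t (S N)). fold q in H1.
  assert (Hn : dl * exp t < INR n).
  { assert (dl < INR n * exp (- t)) by lra.
    apply (Rmult_lt_compat_r (exp t)) in H; [| apply exp_pos].
    rewrite Rmult_assoc, <- exp_plus, Rplus_opp_l, exp_0, Rmult_1_r in H. exact H. }
  assert (0 < dl * exp t) by (apply Rmult_lt_0_compat; auto; apply exp_pos).
  apply ln_increasing in Hn; auto. rewrite ln_mult, ln_exp in Hn by (auto; apply exp_pos). lra.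
Qed.

End Rearrangement.

Variables (mu : nat -> nat -> R) (eps : R) (nX : nat -> nat).
Hypothesis mu_rearr : forall d, is_noninc_rearr (tensor_eig p) d (mu d).
Hypothesis nX_complexity : forall d, is_approx_complexity (mu d) eps (nX d).

Lemma ln_complexity_le X0 d x u : (1 <= d)%nat -> 0 < X0 ->
  (forall s, X0 <= s -> phi s <= 3/2 * phi (2 * s)) -> 0 <= x -> 0 < u ->
  1 - exp (- (INR d * phi x)) + INR d * phi x ^ 2 + INR d * (6 * x * phi x + 2 * X0) / u
    <= eps ^ 2 ->
  ln (INR (nX d)) <= u.
Proof.
  intros Hd HX0 Hdbl Hx Hu Hsmall.
  apply (ln_complexity_le_of_Box d (mu d) eps (nX d) (mu_rearr d) (nX_complexity d) Hd u Hu).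
  intros M. eapply Rle_trans; [apply (sumL_Box_tensor_eig_lt_le X0 x u d M); auto |].
  assert (1 - (1 - phi x) ^ d <= 1 - exp (- (INR d * phi x)) + INR d * phi x ^ 2)
    by (apply one_sub_pow_le; split; [apply phi_nonneg | apply phi_le1]; auto).
  lra.
Qed.

Lemma ln_complexity_ge b : eps ^ 2 < 1 - exp (- b) -> exists C, forall m t,
  (1 <= m)%nat -> 0 <= t -> b <= INR m * phi t -> t - C <= ln (INR (nX m)).
Proof.
  intros Hb. set (dl := (1 - exp (- b) - eps ^ 2) / 2). exists (- ln dl).
  intros m t Hm Ht Hmt.
  enough (t + ln dl <= ln (INR (nX m))) by lra.
  apply (ln_complexity_ge_of_phi m (mu m) eps (nX m) (mu_rearr m) (nX_complexity m) Hm t dl Ht);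
    [unfold dl; lra |].
  assert ((1 - phi t) ^ m <= exp (- (INR m * phi t)))
    by (apply pow_le_exp; split; [apply phi_nonneg | apply phi_le1]; auto).
  assert (exp (- (INR m * phi t)) <= exp (- b)) by (apply exp_le_exp_of_le; lra).
  unfold dl. lra.
Qed.

Hypothesis phi_sv : slowly_varying phi.

(* Each of the three error terms is kept below a third of the gap [g]. *)
Lemma ln_complexity_le_eventually A : 0 < A -> 1 - exp (- A) < eps ^ 2 ->
  exists rho W D0, 0 < rho /\ forall d x, D0 <= INR d -> 0 < x ->
    INR d * phi x <= A -> W <= x * phi x -> ln (INR (nX d)) <= x / rho.
Proof.
  intros HA HAeps. set (g := eps ^ 2 - (1 - exp (- A))).
  destruct (slowly_varying_lower phi phi_sv 2 ltac:(lra) (1/3) ltac:(lra)) as [M2 HM2].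
  set (X0 := Rmax M2 1).
  assert (HX0 : 0 < X0) by (unfold X0; assert (H := Rmax_r M2 1); lra).
  assert (Hdbl : forall s, X0 <= s -> phi s <= 3/2 * phi (2 * s)).
  { intros s Hs. destruct (Rmax_le_inv _ _ _ Hs) as [HM2s _]. destruct (HM2 s HM2s). lra. }
  set (rho := g / (18 * A)).
  assert (Hrho : 0 < rho) by (apply Rdiv_lt_0_compat; unfold g; lra).
  exists rho, (X0 / 3), (Rmax 1 (3 * A ^ 2 / g)). split; auto.
  intros d x Hd Hx HdA HW.
  assert (Hd1 : 1 <= INR d) by (assert (H := Rmax_l 1 (3 * A ^ 2 / g)); lra).
  assert (HdA2 : 3 * A ^ 2 <= g * INR d).
  { assert (H := Rmax_r 1 (3 * A ^ 2 / g)).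
    replace (3 * A ^ 2) with (g * (3 * A ^ 2 / g)) by (field; unfold g; lra).
    apply Rmult_le_compat_l; unfold g in *; lra. }
  apply (ln_complexity_le X0 d x); auto;
    [apply INR_le; simpl; lra | lra | apply Rdiv_lt_0_compat; auto |].
  set (z := phi x) in *. set (y := INR d * z) in *.
  assert (Hz : 0 < z) by (destruct (Rlt_le_dec 0 z); auto; nra).
  assert (Hexp : exp (- A) <= exp (- y)) by (apply exp_le_exp_of_le; lra).
  assert (Hsq : INR d * z ^ 2 <= g / 3).
  { apply Rmult_le_reg_r with (INR d); [lra |].
    replace (INR d * z ^ 2 * INR d) with (y ^ 2) by (unfold y; ring).
    assert (0 <= y) by (unfold y; nra). simpl. nra. }
  replace (INR d * (6 * x * z + 2 * X0) / (x / rho)) with (6 * rho * y + 2 * X0 * rho * INR d / x)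
    by (unfold y; field; lra).
  assert (H6 : 6 * rho * y <= g / 3).
  { replace (g / 3) with (6 * rho * A) by (unfold rho; field; lra). apply Rmult_le_compat_l; lra. }
  assert (H2 : 2 * X0 * rho * INR d / x <= g / 3).
  { apply Rmult_le_reg_r with (x * z); [nra |].
    replace (2 * X0 * rho * INR d / x * (x * z)) with (2 * X0 * rho * y) by (unfold y; field; lra).
    replace (g / 3 * (x * z)) with (6 * rho * A * (x * z)) by (unfold rho; field; lra).
    assert (2 * X0 * rho * y <= 2 * X0 * rho * A) by (apply Rmult_le_compat_l; nra).
    assert (6 * rho * A * (X0 / 3) <= 6 * rho * A * (x * z)) by (apply Rmult_le_compat_l; nra).
    lra. }
  unfold g in *. lra.
Qed.

Lemma ln_complexity_eventually_pos : 0 < eps < 1 ->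
  exists D, forall d, D <= INR d -> 0 < ln (INR (nX d)).
Proof.
  intros Heps. set (b := - ln ((1 - eps ^ 2) / 2)).
  assert (He2 : 0 < (1 - eps ^ 2) / 2) by (simpl; nra).
  assert (Hb : eps ^ 2 < 1 - exp (- b)) by (unfold b; rewrite Ropp_involutive, exp_ln; lra).
  destruct (ln_complexity_ge b Hb) as [C HC].
  destruct phi_sv as [[T HT] _].
  set (t0 := Rmax (Rmax T 0) (C + 1)).
  assert (Ht0 : T <= t0 /\ 0 <= t0 /\ C + 1 <= t0).
  { assert (H1 := Rmax_l T 0). assert (H2 := Rmax_r T 0).
    assert (H3 := Rmax_l (Rmax T 0) (C + 1)). assert (H4 := Rmax_r (Rmax T 0) (C + 1)).
    unfold t0. lra. }
  assert (Hphi0 : 0 < phi t0) by (apply HT; tauto).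
  exists (Rmax 1 (b / phi t0)). intros d Hd.
  assert (H1 := Rmax_l 1 (b / phi t0)). assert (H2 := Rmax_r 1 (b / phi t0)).
  assert (t0 - C <= ln (INR (nX d))).
  { apply HC; [apply INR_le; simpl; lra | tauto |].
    replace b with (b / phi t0 * phi t0) by (field; lra).
    apply Rmult_le_compat_r; lra. }
  lra.
Qed.

Hypothesis p_noninc : forall k, p (S k) <= p k.

Lemma complexity_rapid_variation c : 0 < eps < 1 -> 1 < c ->
  cv_infty (fun d => ln (INR (nX (floorN (c * INR d)))) / ln (INR (nX d))).
Proof.
  intros Heps Hc R0.
  destruct (rapid_variation_constants eps c Heps Hc)
    as [eta [A [b [Heta [HA [HAeps [Hbeps Hb]]]]]]].
  destruct (ln_complexity_le_eventually A HA HAeps) as [rho [W [D0 [Hrho Hup]]]].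
  destruct (ln_complexity_ge b Hbeps) as [C Hlow].
  destruct (ln_complexity_eventually_pos Heps) as [D1 Hpos].
  set (K := Rmax R0 0 + 2).
  assert (HK : R0 + 1 < K /\ 2 <= K)
    by (assert (H1 := Rmax_l R0 0); assert (H2 := Rmax_r R0 0); unfold K; lra).
  destruct (slowly_varying_lower phi phi_sv (K / rho)) with (e := eta) as [MK HMK];
    [apply Rdiv_lt_0_compat; lra | lra |].
  destruct (slowly_varying_level_set phi phi_sv phi_noninc (phi_inf0 p_noninc)
              A eta W (Rmax (Rmax MK (rho * C)) 1) HA Heta) as [D2 Hsel].
  destruct (INR_unbounded (Rmax (Rmax D0 D1) (Rmax D2 (2 / (eta * c))))) as [D HD].
  exists D. intros d Hd. apply le_INR in Hd.
  destruct (Rmax_le_inv (Rmax D0 D1) (Rmax D2 (2 / (eta * c))) (INR d) ltac:(lra)) as [HD01 HD2c].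
  destruct (Rmax_le_inv _ _ _ HD01) as [HD0 HD1]. destruct (Rmax_le_inv _ _ _ HD2c) as [HD2 HDc].
  destruct (Hsel (INR d) HD2) as [x [Hx [Hlo [Hhi HW]]]].
  destruct (Rmax_le_inv _ _ _ Hx) as [Hx' Hx1]. destruct (Rmax_le_inv _ _ _ Hx') as [HxMK HxC].
  destruct (floorN_ge_frac c eta (INR d) ltac:(lra) Heta HDc) as [Hm Hm1].
  destruct (HMK x HxMK) as [Hphi Hgrow].
  assert (Hrhox : 0 < x / rho) by (apply Rdiv_lt_0_compat; lra).
  apply (ratio_gt_of_affine_bounds R0 K C (x / rho)); try lra.
  - apply Hpos; auto.
  - apply Hup; lra.
  - apply Rmult_le_reg_r with rho; auto. unfold Rdiv. rewrite Rmult_assoc, Rinv_l, Rmult_1_r; lra.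
  - apply Hlow; auto; [apply Rmult_le_pos; lra |].
    replace (K * (x / rho)) with (K / rho * x) by (field; lra).
    apply (scaled_product_lower_bound eta c A b (INR d) _ (phi x)); auto; try lra. apply pos_INR.
Qed.

End Spectrum.

Lemma lam_bar_spec lam Lam : eigen_data lam Lam ->
  infinite_sum (lam_bar lam Lam) 1 /\ (forall k, 0 <= lam_bar lam Lam k <= 1) /\
  (forall k, lam_bar lam Lam (S k) <= lam_bar lam Lam k) /\ 0 < lam_bar lam Lam 0%nat.
Proof.
  intros [Hnn [Hm [Hp0 Hs]]].
  assert (HL : forall k, lam k <= Lam).
  { intros k. apply Rle_trans with (sumL lam (seq 0 (S k))).
    - rewrite seq_S, sumL_app. simpl. assert (0 <= sumL lam (seq 0 k)) by (apply sumL_nonneg; auto). lra.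
    - apply sumL_seq_le_infinite_sum; auto. }
  assert (HL0 : 0 < Lam) by (specialize (HL O); lra).
  assert (HLinv : 0 < / Lam) by (apply Rinv_0_lt_compat; auto).
  unfold lam_bar, Rdiv. split; [| split; [| split]].
  - replace 1 with (Lam * / Lam) by (field; lra). apply infinite_sum_mult_r; auto.
  - intros k. split; [apply Rmult_le_pos; auto; lra |].
    rewrite <- (Rinv_r Lam) by lra. apply Rmult_le_compat_r; auto; lra.
  - intros k. apply Rmult_le_compat_r; auto; lra.
  - apply Rmult_lt_0_compat; auto.
Qed.

Theorem corollary1
  (lam : nat -> R) (Lam : R) (phi : R -> R)
  (Hlam : eigen_data lam Lam)
  (Hphi : forall x, 0 <= x ->
     infinite_sum
       (fun k => if Rlt_dec (lam_bar lam Lam k) (exp (- x)) then lam_bar lam Lam k else 0)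
       (phi x))
  (Hsv : slowly_varying phi)
  (mu : nat -> nat -> R)
  (Hmu : forall d, is_noninc_rearr (tensor_eig (lam_bar lam Lam)) d (mu d))
  (eps : R) (Heps : 0 < eps < 1)
  (nX : nat -> nat)
  (HnX : forall d, is_approx_complexity (mu d) eps (nX d))
  (c : R) (Hc : 1 < c) :
  cv_infty (fun d => ln (INR (nX (floorN (c * INR d)))) / ln (INR (nX d))).
Proof.
  destruct (lam_bar_spec lam Lam Hlam) as [Hsum [Hp01 [Hnoninc Hp0]]].
  assert (Hpos : forall k, 0 < lam_bar lam Lam k).
  { apply (eig_pos _ phi); auto; [intros; apply Hp01 | apply (proj1 Hsv)]. }
  apply (complexity_rapid_variation (lam_bar lam Lam) phi Hpos (fun k => proj2 (Hp01 k)) Hsum Hphi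
           mu eps nX); auto.
Qed.
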